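(* There exist absolute constants $c>0$ and $\rho_0\in(0,1/2]$ such that, for all $\rho\in(0,\rho_0]$, $n\ge2$, $1\le m\le n-1$ and $s\in\big(0,1/(m\ln(1/\rho))\big]$, $$\mathcal{E}^{\mathrm{TW}}_{m,s}\ge(c/s)^m(1/\rho)^{\lfloor(n+m-1)/2\rfloor}.$$
   Context: $m$-twist system with parameter $\rho$ on $n$ agents: at each time $t$ the agents are relabeled so that their positions satisfy $x_1\le\dots\le x_n$. A partition of $[n]$ into at most $m$ intervals of consecutive indices $[u_{t,l},v_{t,l}]$ (blocks) is chosen. The next sorted positions $y_1\le\dots\le y_n$ satisfy, for every block $[u,v]$ and $i\in[u,v]$, $$(1-\rho)x_u+\rho x_{\min\{i+1,v\}}\le y_i\le\rho x_{\max\{i-1,u\}}+(1-\rho)x_v.$$ The $s$-energy is $\sum_{t\ge0}\sum_l(x_{v_{t,l}}(t)-x_{u_{t,l}}(t))^s$. $\mathcal{E}^{\mathrm{TW}}_{m,s}$ is its supremum over all $m$-twist systems on $n$ agents with initial positions in $[0,1]$. *)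

From HB Require Import structures.
From mathcomp Require Import all_boot all_order all_algebra.
From mathcomp Require Import all_classical all_reals all_analysis.
Set Implicit Arguments. Unset Strict Implicit. Unset Printing Implicit Defensive.
Import Order.TTheory GRing.Theory Num.Theory.
Local Open Scope ring_scope.

(* Agents are indexed 0..n-1 (paper: 1..n).  A block is a pair (u, v) of
   indices, standing for the interval [u, v]. *)

Definition interval_partition (n m : nat) (B : seq (nat * nat)) : Prop :=
  (size B <= m)%N /\
  (forall b, b \in B -> (b.1 <= b.2)%N /\ (b.2 < n)%N) /\
  (forall i, (i < n)%N -> count (fun b : nat * nat => (b.1 <= i <= b.2)%N) B = 1%N).

(* x t i = i-th smallest position at time t; B t = partition chosen at time t. *)
Definition twist_system (R : realType) (n m : nat) (rho : R)
    (x : nat -> nat -> R) (B : nat -> seq (nat * nat)) : Prop :=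
  (forall t i j, (i <= j)%N -> (j < n)%N -> x t i <= x t j) /\
  (forall t, interval_partition n m (B t)) /\
  (forall t b i, b \in B t -> (b.1 <= i <= b.2)%N ->
     (1 - rho) * x t b.1 + rho * x t (minn i.+1 b.2) <= x t.+1 i /\
     x t.+1 i <= rho * x t (maxn i.-1 b.1) + (1 - rho) * x t b.2).

Definition initial_in_unit (R : realType) (n : nat) (x : nat -> nat -> R) : Prop :=
  forall i, (i < n)%N -> 0 <= x 0%N i <= 1.

Definition s_energy (R : realType) (s : R)
    (x : nat -> nat -> R) (B : nat -> seq (nat * nat)) : \bar R :=
  (\sum_(0 <= t <oo) (\sum_(b <- B t) ((x t b.2 - x t b.1) `^ s))%:E)%E.

Definition twist_energy_sup (R : realType) (n m : nat) (rho s : R) : \bar R :=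
  ereal_sup [set E | exists x B, twist_system n m rho x B /\
                                  initial_in_unit n x /\ E = s_energy s x B].

From HB Require Import structures.
From mathcomp Require Import all_boot all_order all_algebra.
From mathcomp Require Import all_classical all_reals all_analysis.
From mathcomp Require Import zify ring lra.
Import Order.TTheory GRing.Theory Num.Theory.
Set Implicit Arguments. Unset Strict Implicit.
Local Open Scope ring_scope.

(* With a single block, the configuration [0, rho^(k-1), ..., rho, (1/2),
   1 - rho, ..., 1 - rho^(k-1), 1] (k = n/2) is mapped by one step onto a copy of
   itself shrunk by the factor 1 - 2 rho^k, so iterating it about 1/(s rho^k) times
   collects energy of order 1/(s rho^k) before the width has decayed.
   Each extra agent together with an extra block multiplies the energy by order
   1/(s rho): squeeze a configuration of the smaller system into [0, 2 rho] below a
   lone agent at 1, let it run to consensus, which collects its energy scaled by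
   (2 rho)^s >= 1/e, and let one step of the whole block restore the shape at
   width at least 1 - 3 rho; this phase can be repeated about 1/(s rho) times.
   A finite run ending in consensus is extended to a twist system by trivial steps. *)
Section TwistRuns.
Variables (R : realType) (n m : nat) (rho s : R).

Definition sorted_on (x : nat -> R) : Prop :=
  forall i j, (i <= j)%N -> (j < n)%N -> x i <= x j.

Definition twist_step (x : nat -> R) (B : seq (nat * nat)) (y : nat -> R) : Prop :=
  [/\ sorted_on x, sorted_on y, interval_partition n m B &
      forall b i, b \in B -> (b.1 <= i <= b.2)%N ->
        (1 - rho) * x b.1 + rho * x (minn i.+1 b.2) <= y i /\
        y i <= rho * x (maxn i.-1 b.1) + (1 - rho) * x b.2].

Definition step_energy (x : nat -> R) (B : seq (nat * nat)) : R :=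
  \sum_(b <- B) (x b.2 - x b.1) `^ s.

(* The energy index of a run is only a lower bound on the energy it collects. *)
Inductive twist_run : (nat -> R) -> (nat -> R) -> R -> Prop :=
| run_nil x : twist_run x x 0
| run_cons x B y z e :
    twist_step x B y -> twist_run y z e -> twist_run x z (step_energy x B + e)
| run_weaken x z e e' : twist_run x z e -> e' <= e -> twist_run x z e'.

Lemma step_energy_ge0 x B : 0 <= step_energy x B.
Proof. by apply: sumr_ge0 => b _; exact: powR_ge0. Qed.

Lemma twist_run_trans x y z e1 e2 :
  twist_run x y e1 -> twist_run y z e2 -> twist_run x z (e1 + e2).
Proof.
elim=> {x y e1} [x|x B y y' e st _ IH|x y e e' _ IH le] H.
- by rewrite add0r.
- by rewrite -addrA; apply: run_cons st (IH H).
- by apply: run_weaken (IH H) _; rewrite lerD2r.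
Qed.

Lemma twist_run_step x B y : twist_step x B y -> twist_run x y (step_energy x B).
Proof. by move=> st; rewrite -[step_energy _ _]addr0; apply: run_cons st (run_nil _). Qed.

Lemma interval_partition_block B b : interval_partition n m B -> b \in B ->
  (b.1 <= b.2)%N /\ (b.2 < n)%N.
Proof. by case=> _ [+ _]; apply. Qed.

Lemma interval_partition_cover B i : interval_partition n m B -> (i < n)%N ->
  exists2 b, b \in B & (b.1 <= i <= b.2)%N.
Proof. by case=> _ [_ H] /H hc; apply/hasP; rewrite has_count hc. Qed.

Lemma interval_partition_full : (0 < n)%N -> (0 < m)%N ->
  interval_partition n m [:: (0%N, n.-1)].
Proof.
move=> n0 m0; split=> //; split=> [b|i lin /=].
  by rewrite inE => /eqP -> /=; lia.
by have -> : (i <= n.-1)%N by lia.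
Qed.

Lemma twist_step_cst p : (0 < n)%N -> (0 < m)%N ->
  twist_step (cst p) [:: (0%N, n.-1)] (cst p).
Proof.
move=> n0 m0; split; [by [] | by [] | exact: interval_partition_full |].
by move=> b i _ _ /=; split; lra.
Qed.

Lemma twist_step_top x B y : (0 < n)%N -> 0 <= rho <= 1 ->
  twist_step x B y -> y n.-1 <= x n.-1.
Proof.
move=> n0 /andP[r0 r1] [sx _ pB H].
have [b hb hi] : exists2 b, b \in B & (b.1 <= n.-1 <= b.2)%N.
  by apply: interval_partition_cover pB _; lia.
have [h1 h2] := interval_partition_block pB hb.
have e2 : b.2 = n.-1 by lia.
have [_ hu] := H b _ hb hi.
have : x (maxn n.-1.-1 b.1) <= x n.-1 by apply: sx; lia.
rewrite e2 in hu; nra.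
Qed.

Lemma twist_run_top x z e : (0 < n)%N -> 0 <= rho <= 1 ->
  twist_run x z e -> z n.-1 <= x n.-1.
Proof.
move=> n0 hr; elim=> {x z e} [x|x B y z e st _ IH|x z e e' _ IH _] //.
exact: le_trans IH (twist_step_top n0 hr st).
Qed.

End TwistRuns.

Section InfiniteSystems.
Variables (R : realType) (n m : nat) (rho s : R).

Lemma s_energy_ge0 (X : nat -> nat -> R) Bs : (0 <= s_energy s X Bs)%E.
Proof. by apply: nneseries_ge0 => t _ _; rewrite lee_fin; exact: step_energy_ge0. Qed.

Lemma s_energy_cons (X : nat -> nat -> R) Bs x B :
  s_energy s (fun t => if t is t'.+1 then X t' else x)
             (fun t => if t is t'.+1 then Bs t' else B) =
  ((step_energy s x B)%:E + s_energy s X Bs)%E.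
Proof.
rewrite /s_energy (nneseries_split 0 1); last by move=> t _; rewrite lee_fin step_energy_ge0.
rewrite add0n big_nat1 -(nneseries_addn 1); last by move=> t; rewrite lee_fin step_energy_ge0.
by congr (_ + _)%E; apply: eq_eseriesr => t _; rewrite addn1.
Qed.

Lemma twist_system_of_steps (X : nat -> nat -> R) Bs :
  (forall t, twist_step n m rho (X t) (Bs t) (X t.+1)) -> twist_system n m rho X Bs.
Proof.
move=> st; split=> [t|]; first by case: (st t).
by split=> t; case: (st t) => // _ _ _; apply.
Qed.

(* A run ending in a consensus is continued by the trivial one-block step forever. *)
Lemma twist_steps_of_run x z e p : (0 < n)%N -> (0 < m)%N ->
  twist_run n m rho s x z e -> z = cst p ->
  exists X Bs, [/\ forall t, twist_step n m rho (X t) (Bs t) (X t.+1),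
                   X 0%N = x & (e%:E <= s_energy s X Bs)%E].
Proof.
move=> n0 m0; elim=> {x z e} [x|x B y z e st _ IH|x z e e' _ IH le] zE.
- exists (fun=> x), (fun=> [:: (0%N, n.-1)]); split=> //; last exact: s_energy_ge0.
  by move=> t; rewrite zE; exact: twist_step_cst.
- have [X [Bs [sX X0 hE]]] := IH zE.
  exists (fun t => if t is t'.+1 then X t' else x),
         (fun t => if t is t'.+1 then Bs t' else B); split=> //.
    by case=> [|t] //=; rewrite X0.
  by rewrite s_energy_cons EFinD leeD2l.
- have [X [Bs [sX X0 hE]]] := IH zE.
  by exists X, Bs; split=> //; apply: le_trans hE; rewrite lee_fin.
Qed.

Lemma twist_energy_sup_ge_run x p e : (0 < n)%N -> (0 < m)%N ->
  (forall i, (i < n)%N -> 0 <= x i <= 1) -> twist_run n m rho s x (cst p) e ->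
  (e%:E <= twist_energy_sup n m rho s)%E.
Proof.
move=> n0 m0 x01 run.
have [X [Bs [sX X0 hE]]] := twist_steps_of_run n0 m0 run erefl.
apply: le_trans hE _; apply: ereal_sup_ubound; exists X, Bs.
by split; [exact: twist_system_of_steps | split=> // i; rewrite X0; exact: x01].
Qed.

End InfiniteSystems.

Section Rescaling.
Variables (R : realType) (n m : nat) (rho s : R).

Definition rescale (a l : R) (x : nat -> R) : nat -> R := fun i => a + l * x i.

Lemma rescale_cst a l p : rescale a l (cst p) = cst (a + l * p).
Proof. by []. Qed.

Lemma rescale_comp a l a' l' x :
  rescale a l (rescale a' l' x) = rescale (a + l * a') (l * l') x.
Proof. by apply/funext => i; rewrite /rescale; ring. Qed.

Lemma rescale01 x : rescale 0 1 x = x.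
Proof. by apply/funext => i; rewrite /rescale add0r mul1r. Qed.

Lemma sorted_on_rescale a l x : 0 <= l -> sorted_on n x -> sorted_on n (rescale a l x).
Proof. by move=> l0 sx i j ij jn; rewrite /rescale lerD2l ler_wpM2l // sx. Qed.

Lemma twist_step_rescale a l x B y : 0 < l ->
  twist_step n m rho x B y -> twist_step n m rho (rescale a l x) B (rescale a l y).
Proof.
move=> l0 [sx sy pB H]; split=> //; try exact: sorted_on_rescale (ltW l0) _.
by move=> b i hb hi; have [h1 h2] := H b i hb hi; rewrite /rescale; split; nra.
Qed.

Lemma step_energy_rescale a l x B : 0 <= l -> sorted_on n x ->
  interval_partition n m B -> step_energy s (rescale a l x) B = l `^ s * step_energy s x B.
Proof.
move=> l0 sx pB; rewrite /step_energy big_distrr /=.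
apply: eq_big_seq => b hb; have [h1 h2] := interval_partition_block pB hb.
rewrite /rescale (_ : a + l * x b.2 - (a + l * x b.1) = l * (x b.2 - x b.1)); last by ring.
by rewrite powRM // subr_ge0 sx.
Qed.

Lemma twist_run_rescale a l x z e : 0 < l ->
  twist_run n m rho s x z e -> twist_run n m rho s (rescale a l x) (rescale a l z) (l `^ s * e).
Proof.
move=> l0; elim=> {x z e} [x|x B y z e st _ IH|x z e e' _ IH le].
- by rewrite mulr0; exact: run_nil.
- case: (st) => sx _ pB _.
  rewrite mulrDr -(step_energy_rescale a (ltW l0) sx pB).
  exact: run_cons (twist_step_rescale a l0 st) IH.
- by apply: run_weaken IH _; rewrite ler_wpM2l // powR_ge0.
Qed.

End Rescaling.

Section TopAgent.
Variables (R : realType) (n m : nat) (rho s : R).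

Definition extend_top (x : nat -> R) (q : R) : nat -> R :=
  fun i => if i == n then q else x i.

Lemma extend_top_lt x q i : (i < n)%N -> extend_top x q i = x i.
Proof. by move=> h; rewrite /extend_top ifN // neq_ltn h. Qed.

Lemma extend_top_at x q : extend_top x q n = q.
Proof. by rewrite /extend_top eqxx. Qed.

Lemma sorted_on_extend_top x q : (0 < n)%N -> sorted_on n x -> x n.-1 <= q ->
  sorted_on n.+1 (extend_top x q).
Proof.
move=> n_gt0 sx xq i j ij jn; have [->|jn'] := eqVneq j n.
  rewrite extend_top_at; have [->|ni] := eqVneq i n; first by rewrite extend_top_at.
  by rewrite extend_top_lt; [apply: le_trans xq; apply: sx|]; lia.
by rewrite !extend_top_lt; [apply: sx|..]; lia.
Qed.

Lemma interval_partition_extend_top B : interval_partition n m B ->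
  interval_partition n.+1 m.+1 (rcons B (n, n)).
Proof.
case=> [sz [inB cnt]]; split; first by rewrite size_rcons.
split=> [b|i ilt].
  by rewrite mem_rcons inE => /orP[/eqP -> //|/inB [? ?]]; split=> //; exact: ltnW.
rewrite -cats1 count_cat /=; have [->|ne] := eqVneq i n.
  rewrite leqnn /= -[RHS]add0n; congr (_ + _)%N; apply/eqP.
  rewrite -leqn0 leqNgt -has_count; apply/hasPn => b /inB [_ h2].
  by apply/negP => /andP[_]; rewrite leqNgt h2.
by rewrite cnt; [have -> : (n <= i)%N = false by lia|lia].
Qed.

Lemma twist_step_extend_top x B y q : (0 < n)%N -> 0 <= rho <= 1 ->
  twist_step n m rho x B y -> x n.-1 <= q ->
  twist_step n.+1 m.+1 rho (extend_top x q) (rcons B (n, n)) (extend_top y q).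
Proof.
move=> n_gt0 rho01 st xq; have yq := le_trans (twist_step_top n_gt0 rho01 st) xq.
case: st => sx sy pB H; split; try exact: sorted_on_extend_top n_gt0 _ _.
  exact: interval_partition_extend_top pB.
move=> b i; rewrite mem_rcons inE => /orP[/eqP -> /= hi|hb hi].
  have -> : i = n by lia.
  rewrite (_ : minn n.+1 n = n) 1?(_ : maxn n.-1 n = n) ?extend_top_at; try lia.
  by split; lra.
have [h1 h2] := interval_partition_block pB hb.
by rewrite !extend_top_lt; [exact: H|lia..].
Qed.

Lemma step_energy_extend_top x B q : s != 0 -> interval_partition n m B ->
  step_energy s (extend_top x q) (rcons B (n, n)) = step_energy s x B.
Proof.
move=> s0 pB; rewrite /step_energy -cats1 big_cat big_seq1 /= subrr powR0 // addr0.
apply: eq_big_seq => b hb; have [h1 h2] := interval_partition_block pB hb.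
by rewrite !extend_top_lt //; exact: leq_ltn_trans h1 h2.
Qed.

Lemma twist_run_extend_top x z e q : (0 < n)%N -> 0 <= rho <= 1 -> s != 0 ->
  twist_run n m rho s x z e -> x n.-1 <= q ->
  twist_run n.+1 m.+1 rho s (extend_top x q) (extend_top z q) e.
Proof.
move=> n_gt0 rho01 s0; elim=> {x z e} [x|x B y z e st _ IH|x z e e' _ IH le] xq.
- exact: run_nil.
- case: (st) => _ _ pB _; rewrite -(step_energy_extend_top x q s0 pB).
  apply: run_cons (twist_step_extend_top n_gt0 rho01 st xq) (IH _).
  exact: le_trans (twist_step_top n_gt0 rho01 st) xq.
- exact: run_weaken (IH xq) le.
Qed.

End TopAgent.

Section OneBlockSteps.
Variables (R : realType) (n m : nat) (rho : R).
Hypotheses (n_gt0 : (0 < n)%N) (m_gt0 : (0 < m)%N).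

Lemma twist_step_collapse x : 0 <= rho <= 2^-1 -> sorted_on n x ->
  twist_step n m rho x [:: (0%N, n.-1)] (cst ((1 - rho) * x 0%N + rho * x n.-1)).
Proof.
move=> /andP[rho_ge0 rho_le] sx; split=> //; first exact: interval_partition_full.
move=> b i; rewrite inE => /eqP -> /= hi.
have h0 : (1 - 2 * rho) * x 0%N <= (1 - 2 * rho) * x n.-1.
  by apply: ler_wpM2l; [lra | apply: sx; lia].
have h1 : rho * x (minn i.+1 n.-1) <= rho * x n.-1 by apply: ler_wpM2l => //; apply: sx; lia.
have h2 : rho * x 0%N <= rho * x (maxn i.-1 0) by apply: ler_wpM2l => //; apply: sx; lia.
by rewrite /cst; split; lra.
Qed.

Lemma twist_step_refresh P q C : 0 <= rho <= 2^-1 -> P <= q -> sorted_on n.+1 C ->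
  (forall i, (i <= n)%N -> 0 <= C i <= 1) -> 2 * rho <= C n.-1 ->
  twist_step n.+1 m rho (extend_top n (cst P) q) [:: (0%N, n)]
    (rescale P ((1 - rho) * (q - P)) C).
Proof.
move=> /andP[rho_ge0 rho_le] Pq sC C01 C2.
have w0 : 0 <= (1 - rho) * (q - P) by apply: mulr_ge0; lra.
have top01 j : P <= extend_top n (cst P) q j <= q.
  by rewrite /extend_top; case: eqP => _; rewrite ?Pq ?lexx.
split.
- by apply: sorted_on_extend_top => // *; rewrite /cst.
- exact: sorted_on_rescale.
- exact: (interval_partition_full (n := n.+1)).
move=> b i; rewrite inE => /eqP -> /= hi.
rewrite extend_top_lt // extend_top_at /rescale.
have [C0 C1] := andP (C01 i hi).
split; last first.
  have [e _] := andP (top01 (maxn i.-1 0)); have := ler_wpM2l rho_ge0 e.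
  have : (1 - rho) * (q - P) * C i <= (1 - rho) * (q - P) by rewrite ler_piMr.
  lra.
have [lt|ge] := ltnP i.+1 n.
  rewrite extend_top_lt // /cst.
  have : 0 <= (1 - rho) * (q - P) * C i by apply: mulr_ge0.
  lra.
rewrite extend_top_at /cst.
have Ci : 2 * rho <= C i by apply: le_trans C2 (sC _ _ _ _); lia.
have : rho * (q - P) <= (1 - rho) * C i * (q - P).
  by apply: ler_wpM2r; [rewrite subr_ge0 | nra].
lra.
Qed.

End OneBlockSteps.

Section GeometricEnergy.
Variable R : realType.

Lemma ge0_ler_powR2 (s x y : R) : 0 <= s -> 0 <= x -> x <= y -> x `^ s <= y `^ s.
Proof. by move=> s0 x0 xy; apply: ge0_ler_powR; rewrite // nnegrE (le_trans x0). Qed.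

Lemma ln_le_subr1 (x : R) : 0 < x -> ln x <= x - 1.
Proof. by move=> x0; have := @le_ln1Dx _ (x - 1); rewrite addrCA subrr addr0; apply; lra. Qed.

Lemma ln_1B_ge (d : R) : 0 <= d <= 2^-1 -> - (2 * d) <= ln (1 - d).
Proof.
move=> /andP[d0 d1]; have d1' : 0 < 1 - d by lra.
have := ln_le_subr1 (_ : 0 < (1 - d)^-1); rewrite lnV ?posrE // invr_gt0 => /(_ d1') h.
have hu : (1 - d)^-1 * (1 - d) = 1 by rewrite mulVf // gt_eqF.
suff : (1 - d)^-1 - 1 <= 2 * d by lra.
nra.
Qed.

(* [N] steps shrinking the width by [1 - d] each collect [N ((1 - d)^N)^s], and
   [N] close to [1 / (s d)] keeps [((1 - d)^N)^s] above [expR (-2)]. *)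
Lemma geometric_energy_bound (d s : R) : 0 < d <= 2^-1 -> 0 < s -> s * d <= 2^-1 ->
  exists N : nat, expR (-2) / (2 * s * d) <= N%:R * ((1 - d) ^+ N) `^ s.
Proof.
move=> /andP[d0 d1] s0 sd; set u := (s * d)^-1.
have sd0 : 0 < s * d by apply: mulr_gt0.
have hu : u * (s * d) = 1 by rewrite mulVf // gt_eqF.
have u0 : 0 < u by rewrite invr_gt0.
have /andP[N1 N2] := truncn_itv (ltW u0).
exists (Num.trunc u); set N := Num.trunc u in N1 N2 *.
have d1' : 0 < 1 - d by lra.
rewrite /powR gt_eqF ?exprn_gt0 // lnXn // -[ln _ *+ N]mulr_natr.
have hl : - (2 * d) <= ln (1 - d) by apply: ln_1B_ge; rewrite d1 ltW.
have h2 : - 2 <= s * (ln (1 - d) * N%:R).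
  have : s * (- (2 * d) * N%:R) <= s * (ln (1 - d) * N%:R).
    by apply: ler_wpM2l; [lra | apply: ler_wpM2r].
  have : s * d * N%:R <= s * d * u by apply: ler_wpM2l; lra.
  nra.
have -> : expR (-2) / (2 * s * d) = u / 2 * expR (-2).
  by rewrite /u; field; rewrite !gt_eqF.
apply: ler_pM; [nra | exact: ltW (expR_gt0 _) | nra | by rewrite ler_expR].
Qed.

End GeometricEnergy.

Section SelfSimilarRuns.
Variables (R : realType) (n m : nat) (rho s : R).

Definition self_similar (C : nat -> R) (r K : R) : Prop :=
  forall a D, 0 < D -> exists a' D', r * D <= D' /\
    twist_run n m rho s (rescale a D C) (rescale a' D' C) (D `^ s * K).

Lemma self_similar_iterate C r K : 0 < r <= 1 -> 0 <= K -> 0 <= s ->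
  self_similar C r K -> forall N a D, 0 < D -> exists a' D', 0 < D' /\
    twist_run n m rho s (rescale a D C) (rescale a' D' C) (N%:R * (r ^+ N * D) `^ s * K).
Proof.
move=> /andP[r0 r1] K0 s0 phase; elim=> [|N IH] a D D0.
  by exists a, D; split=> //; apply: run_weaken (run_nil _ _ _ _ _) _; rewrite !mul0r.
have [a1 [D1 [D1ge run1]]] := phase a D D0.
have [|a' [D' [D'0 run2]]] := IH a1 D1; first by apply: lt_le_trans D1ge; exact: mulr_gt0.
exists a', D'; split=> //; apply: run_weaken (twist_run_trans run1 run2) _.
have rN1 : 0 <= r ^+ N <= 1 by rewrite exprn_ge0 ?exprn_ile1 // ltW.
have DrN : 0 <= r ^+ N.+1 * D by rewrite mulr_ge0 ?exprn_ge0 ?ltW.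
have le_D : (r ^+ N.+1 * D) `^ s <= D `^ s.
  apply: ge0_ler_powR2 => //; rewrite -[leRHS]mul1r.
  by apply: ler_wpM2r; [exact: ltW | rewrite exprn_ile1 // ltW].
have le_D1 : (r ^+ N.+1 * D) `^ s <= (r ^+ N * D1) `^ s.
  by apply: ge0_ler_powR2 => //; rewrite exprSr -mulrA ler_wpM2l //; case/andP: rN1.
rewrite -natr1 mulrDl mul1r mulrDl addrC -!mulrA.
by apply: lerD; [exact: ler_wpM2r | apply: ler_wpM2l => //; exact: ler_wpM2r].
Qed.

Definition attainable (E : R) : Prop :=
  exists S p, [/\ sorted_on n S, S 0%N = 0, S n.-1 = 1 & twist_run n m rho s S (cst p) E].

Lemma attainable_weaken E E' : attainable E -> E' <= E -> attainable E'.
Proof. by move=> [S [p [sS S0 S1 run]]] le; exists S, p; split=> //; exact: run_weaken le. Qed.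

Lemma attainable_self_similar C d K : (0 < n)%N -> (0 < m)%N -> 0 <= rho <= 2^-1 ->
  sorted_on n C -> C 0%N = 0 -> C n.-1 = 1 ->
  0 < d <= 2^-1 -> 0 < s -> s * d <= 2^-1 -> 0 <= K ->
  self_similar C (1 - d) K -> attainable (expR (-2) / (2 * s * d) * K).
Proof.
move=> n0 m0 rho_half sC C0 C1 d_half s0 sd K0 phase.
have [N geomN] := geometric_energy_bound d_half s0 sd.
have [|a' [D' [D'0 run]]] := self_similar_iterate (r := 1 - d) _ K0 (ltW s0) phase N 0 ltr01.
  by apply/andP; split; lra.
rewrite rescale01 mulr1 in run.
have collapse := twist_step_collapse n0 m0 rho_half (sorted_on_rescale a' (ltW D'0) sC).
exists C, ((1 - rho) * rescale a' D' C 0%N + rho * rescale a' D' C n.-1); split=> //.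
apply: run_weaken (twist_run_trans run (twist_run_step s collapse)) _.
by rewrite -[leLHS]addr0 lerD ?step_energy_ge0 // ler_wpM2r.
Qed.

End SelfSimilarRuns.

Lemma sorted_on_unit (R : realType) n (S : nat -> R) : sorted_on n S -> S 0%N = 0 ->
  S n.-1 = 1 -> forall i, (i < n)%N -> 0 <= S i <= 1.
Proof. by move=> sS S0 S1 i lt; rewrite -{1}S0 -S1 !sS //; lia. Qed.

Section NestedConfiguration.
Variables (R : realType) (n m : nat) (rho s : R).

Definition nested_config (S : nat -> R) : nat -> R :=
  extend_top n (rescale 0 (2 * rho) S) 1.

Lemma nested_configP S : (0 < n)%N -> 0 <= rho <= 2^-1 ->
  sorted_on n S -> S 0%N = 0 -> S n.-1 = 1 ->
  [/\ sorted_on n.+1 (nested_config S),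
      forall i, (i <= n)%N -> 0 <= nested_config S i <= 1,
      nested_config S n.-1 = 2 * rho, nested_config S 0%N = 0 &
      nested_config S n = 1].
Proof.
move=> n0 /andP[rho0 rho1] sS S0 S1; rewrite /nested_config.
have S01 := sorted_on_unit sS S0 S1.
have lower i : (i < n)%N -> extend_top n (rescale 0 (2 * rho) S) 1 i = 2 * rho * S i.
  by move=> lt; rewrite extend_top_lt // /rescale add0r.
split; rewrite ?extend_top_at ?lower ?S0 ?S1 ?mulr0 ?mulr1 //; try lia.
- apply: sorted_on_extend_top => //; first by apply: sorted_on_rescale => //; lra.
  by rewrite /rescale S1; lra.
move=> i; rewrite leq_eqVlt => /orP[/eqP ->|lt]; first by rewrite extend_top_at ler01 lexx.
have /andP[Si0 Si1] := S01 i lt; rewrite lower //.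
have : 2 * rho * S i <= 2 * rho * 1 by apply: ler_wpM2l; lra.
by rewrite mulr_ge0 //=; [lra | exact: mulr_ge0].
Qed.

(* One phase: the lower agents run their own system to a consensus while the
   top agent stays put, then one step of the whole block restores the shape. *)
Lemma self_similar_nested S p E : (0 < n)%N -> 0 < rho <= 2^-1 -> 0 < s ->
  sorted_on n S -> S 0%N = 0 -> S n.-1 = 1 -> twist_run n m rho s S (cst p) E ->
  self_similar n.+1 m.+1 rho s (nested_config S) (1 - 3 * rho) ((2 * rho) `^ s * E).
Proof.
move=> n0 /andP[rho0 rho1] s0 sS S0 S1 run a D D0.
have rho_half : 0 <= rho <= 2^-1 by rewrite rho1 ltW.
have rho01 : 0 <= rho <= 1 by apply/andP; split; lra.
have p1 : p <= 1 by rewrite -S1; exact: twist_run_top n0 rho01 run.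
have [sC C01 C2 _ _] := nested_configP n0 rho_half sS S0 S1.
have C2le : 2 * rho <= nested_config S n.-1 by rewrite C2.
have w0 : 0 < D * (2 * rho) by rewrite !mulr_gt0.
set P := a + D * (2 * rho) * p; set q := a + D.
have p2 : 2 * rho * p <= 2 * rho by rewrite -[leRHS]mulr1 ler_wpM2l //; lra.
have Pq : P <= q.
  by rewrite lerD2l -[leRHS]mulr1 -mulrA; apply: ler_wpM2l; [exact: ltW | lra].
have low := twist_run_extend_top n0 rho01 (lt0r_neq0 s0) (twist_run_rescale a w0 run) (q := q).
rewrite rescale_cst -/P in low.
have run1 : twist_run n.+1 m.+1 rho s (rescale a D (nested_config S))
                         (extend_top n (cst P) q) ((D * (2 * rho)) `^ s * E).
  have -> : rescale a D (nested_config S) = extend_top n (rescale a (D * (2 * rho)) S) q.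
    apply/funext => i; rewrite /nested_config /extend_top /rescale.
    by case: eqP => _; rewrite ?mulr1 // add0r mulrA.
  by apply: low; rewrite /rescale S1 mulr1 lerD2l -[leRHS]mulr1; apply: ler_wpM2l; lra.
have refresh := twist_step_refresh n0 (ltn0Sn m) rho_half Pq sC C01 C2le.
exists P, ((1 - rho) * (q - P)); split.
  have : (1 - rho) * (D * (2 * rho * p)) <= (1 - rho) * (D * (2 * rho)).
    by apply: ler_wpM2l; [lra | rewrite ler_wpM2l // ltW].
  have : 0 <= D * (rho * rho) by rewrite mulr_ge0 ?mulr_ge0 // ltW.
  rewrite /q /P; lra.
apply: run_weaken (twist_run_trans run1 (twist_run_step s refresh)) _.
rewrite [(D * _) `^ s]powRM; [|exact: ltW|lra].
by rewrite -mulrA lerDl step_energy_ge0.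
Qed.

End NestedConfiguration.

Lemma attainable_step (R : realType) n m (rho s E : R) :
  (0 < n)%N -> 0 < rho <= 6^-1 -> 0 < s -> s * (3 * rho) <= 2^-1 -> 0 <= E ->
  attainable n m rho s E ->
  attainable n.+1 m.+1 rho s (expR (-2) / (2 * s * (3 * rho)) * ((2 * rho) `^ s * E)).
Proof.
move=> n0 /andP[rho0 rho6] s0 s3 E0 [S [p [sS S0 S1 run]]].
have rho_half : 0 <= rho <= 2^-1 by apply/andP; split; lra.
have rho_pos : 0 < rho <= 2^-1 by apply/andP; split; lra.
have [sC _ _ C0 C1] := nested_configP n0 rho_half sS S0 S1.
have phase := self_similar_nested n0 rho_pos s0 sS S0 S1 run.
apply: (attainable_self_similar (ltn0Sn n) (ltn0Sn m) rho_half sC C0 C1 _ s0 s3 _ phase).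
  by apply/andP; split; lra.
by rewrite mulr_ge0 ?powR_ge0.
Qed.

Section BaseConfiguration.
Variables (R : realType) (rho : R) (n : nat).
Hypotheses (rho_range : 0 < rho <= 2^-1) (n_gt1 : (1 < n)%N).

Definition lower_profile (i : nat) : R := if i == 0%N then 0 else rho ^+ (n./2 - i).

Definition base_config (i : nat) : R :=
  if (i.*2.+1 < n)%N then lower_profile i
  else if i.*2.+1 == n then 2^-1 else 1 - lower_profile (n.-1 - i).

Definition base_gap : R := rho ^+ n./2.

Lemma rho_expn01 k : 0 <= rho ^+ k <= 1.
Proof.
have /andP[r0 r1] := rho_range; have r0' := ltW r0.
by rewrite exprn_ge0 //= exprn_ile1 //; lra.
Qed.

Lemma lower_profile_bounds i : (i.*2.+1 < n)%N -> 0 <= lower_profile i <= rho.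
Proof.
have /andP[r0 r1] := rho_range.
move=> h; rewrite /lower_profile; case: eqP => _; first by rewrite lexx (ltW r0).
rewrite (_ : n./2 - i = (n./2 - i).-1.+1)%N; last by lia.
have /andP[e0 e1] := rho_expn01 (n./2 - i).-1.
by rewrite exprS mulr_ge0 ?(ltW r0) //= -[leRHS]mulr1 ler_pM2l.
Qed.

Lemma base_config_left i : (i.*2.+1 < n)%N -> base_config i = lower_profile i.
Proof. by move=> h; rewrite /base_config h. Qed.

Lemma base_config_sym i : (i < n)%N -> base_config (n.-1 - i) = 1 - base_config i.
Proof.
move=> lt; rewrite /base_config.
have [h|h] := ltnP i.*2.+1 n.
  rewrite ifF ?ifF; [by rewrite subKn //; lia | apply/eqP; lia | lia].
have [e|ne] := eqVneq i.*2.+1 n.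
  by rewrite ifF ?ifT; [lra | apply/eqP; lia | lia].
by rewrite ifT; [lra | lia].
Qed.

Lemma base_config_upper_half i : (i < n)%N -> ~~ (i.*2.+1 < n)%N ->
  2^-1 <= base_config i <= 1.
Proof.
have /andP[r0 r1] := rho_range.
move=> lt /negbTE h; rewrite /base_config h; case: eqP => ne.
  by apply/andP; split; lra.
have /andP[L0 L1] : 0 <= lower_profile (n.-1 - i) <= rho.
  by apply: lower_profile_bounds; lia.
by apply/andP; split; lra.
Qed.

Lemma base_config_bounds i : (i < n)%N -> 0 <= base_config i <= 1.
Proof.
have /andP[r0 r1] := rho_range.
move=> lt; have [h|h] := boolP (i.*2.+1 < n)%N.
  rewrite base_config_left //; have /andP[L0 L1] := lower_profile_bounds h.
  by apply/andP; split; lra.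
have /andP[X0 X1] := base_config_upper_half lt h.
by apply/andP; split; lra.
Qed.

Lemma base_config0 : base_config 0%N = 0.
Proof. by rewrite base_config_left. Qed.

Lemma base_config_last : base_config n.-1 = 1.
Proof. by have := @base_config_sym 0; rewrite subn0 base_config0 subr0; apply; lia. Qed.

Lemma base_config_succ_left j : (j.+1.*2.+1 < n)%N -> base_config j <= base_config j.+1.
Proof.
have /andP[r0 r1] := rho_range.
move=> h; rewrite !base_config_left //; last by lia.
rewrite {1}/lower_profile; case: eqP => [_|j0].
  by have /andP[] := lower_profile_bounds h.
rewrite /lower_profile /= (_ : n./2 - j = (n./2 - j.+1).+1)%N; last by lia.
have /andP[e0 _] := rho_expn01 (n./2 - j.+1).
by rewrite exprS ler_piMl //; lra.
Qed.

Lemma base_config_succ j : (j.+1 < n)%N -> base_config j <= base_config j.+1.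
Proof.
have /andP[r0 r1] := rho_range.
move=> lt; have [h|h] := boolP (j.+1.*2.+1 < n)%N; first exact: base_config_succ_left.
have /andP[up _] := base_config_upper_half lt h.
have [h'|h'] := boolP (j.*2.+1 < n)%N.
  by rewrite base_config_left //; have /andP[_] := lower_profile_bounds h'; lra.
have [e|ne] := eqVneq j.*2.+1 n; first by rewrite /base_config (negbTE h') e eqxx.
have ge : (n <= j.*2)%N by move: h' ne; rewrite -leqNgt leq_eqVlt eq_sym => /orP[->|].
have h2 : ((n.-1 - j.+1).+1.*2.+1 < n)%N by lia.
have := base_config_succ_left h2.
rewrite (_ : (n.-1 - j.+1).+1 = n.-1 - j)%N; last by lia.
by rewrite !base_config_sym //; [lra | lia].
Qed.

Lemma base_config_sorted : sorted_on n base_config.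
Proof.
move=> i j ij jn; elim: j ij jn => [|j IH] ij jn; first by have -> : i = 0%N by lia.
have [->|lt] := eqVneq i j.+1; first exact: lexx.
by apply: le_trans (IH _ _) (base_config_succ _); lia.
Qed.

Lemma base_gap_bounds : 0 < base_gap <= rho.
Proof.
have /andP[r0 r1] := rho_range.
rewrite /base_gap (_ : n./2 = (n./2).-1.+1)%N; last by lia.
have /andP[_ e1] := rho_expn01 (n./2).-1.
by rewrite exprS mulr_gt0 ?exprn_gt0 //= -[leRHS]mulr1 ler_pM2l.
Qed.

Lemma base_config_shift j : (j.*2.+1 < n)%N -> rho * base_config j.+1 <= rho ^+ (n./2 - j).
Proof.
have /andP[r0 r1] := rho_range.
move=> h; have [h'|h'] := boolP (j.+1.*2.+1 < n)%N.
  rewrite base_config_left // /lower_profile /= -exprS.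
  by rewrite (_ : (n./2 - j.+1).+1 = n./2 - j)%N; last by lia.
rewrite (_ : n./2 - j = 1)%N; last by lia.
have /andP[_ X1] : 0 <= base_config j.+1 <= 1 by apply: base_config_bounds; lia.
by rewrite expr1 -[leRHS]mulr1 ler_pM2l.
Qed.

Lemma base_config_lower j : (j < n)%N ->
  rho * base_config (minn j.+1 n.-1) <= base_gap + (1 - 2 * base_gap) * base_config j.
Proof.
have /andP[r0 r1] := rho_range; have /andP[b0 b1] := base_gap_bounds.
move=> lt; have [e|ne] := eqVneq j n.-1.
  rewrite e (_ : minn n.-1.+1 n.-1 = n.-1); last by lia.
  by rewrite base_config_last; lra.
rewrite (_ : minn j.+1 n.-1 = j.+1); last by lia.
have /andP[_ X1] : 0 <= base_config j.+1 <= 1 by apply: base_config_bounds; lia.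
have rX1 : rho * base_config j.+1 <= rho by rewrite -[leRHS]mulr1 ler_pM2l.
have [h|h] := boolP (j.*2.+1 < n)%N; last first.
  have /andP[Xj _] := base_config_upper_half lt h.
  have g0 : 0 <= 1 - 2 * base_gap by lra.
  have := ler_wpM2l g0 Xj; lra.
apply: le_trans (base_config_shift h) _.
rewrite base_config_left //; have /andP[L0 L1] := lower_profile_bounds h.
rewrite /lower_profile in L0 L1 *; case: eqP L0 L1 => [->|_] L0 L1.
  by rewrite subn0 mulr0 addr0.
have L2 : rho ^+ (n./2 - j) <= 2^-1 by lra.
have := ler_wpM2l (ltW b0) L2; lra.
Qed.

Lemma twist_step_base : twist_step n 1 rho base_config [:: (0%N, n.-1)]
  (rescale base_gap (1 - 2 * base_gap) base_config).
Proof.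
have /andP[r0 r1] := rho_range; have /andP[b0 b1] := base_gap_bounds.
split; [exact: base_config_sorted | | by apply: interval_partition_full; lia |].
  by apply: sorted_on_rescale base_config_sorted; lra.
move=> bl i; rewrite inE => /eqP -> /= hi.
rewrite base_config0 base_config_last /rescale; split.
  by rewrite mulr0 add0r; apply: base_config_lower; lia.
set j := (n.-1 - i)%N; have ij : i = (n.-1 - j)%N by rewrite /j; lia.
have jn : (j < n)%N by rewrite /j; lia.
have := base_config_lower jn; rewrite ij base_config_sym; last by lia.
rewrite (_ : maxn (n.-1 - j).-1 0 = n.-1 - minn j.+1 n.-1)%N; last by lia.
by rewrite base_config_sym; [lra | lia].
Qed.

End BaseConfiguration.

Lemma attainable_base (R : realType) (rho s : R) n : 0 < rho <= 4^-1 -> (1 < n)%N ->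
  0 < s -> s * (2 * base_gap rho n) <= 2^-1 ->
  attainable n 1 rho s (expR (-2) / (2 * s * (2 * base_gap rho n))).
Proof.
move=> /andP[r0 r1] n_gt1 s0 sb.
have rho_range : 0 < rho <= 2^-1 by apply/andP; split; lra.
have /andP[b0 b1] := base_gap_bounds rho_range n_gt1.
have sX := base_config_sorted rho_range n_gt1.
have X0 := base_config0 rho n_gt1; have X1 := base_config_last rho_range n_gt1.
have step := twist_step_base rho_range n_gt1.
have phase : self_similar n 1 rho s (base_config rho n) (1 - 2 * base_gap rho n) 1.
  move=> a D D0; exists (a + D * base_gap rho n), (D * (1 - 2 * base_gap rho n)).
  split; first by rewrite mulrC.
  have := twist_run_step s (twist_step_rescale a D0 step); rewrite rescale_comp.
  have [_ _ pB _] := step; rewrite (step_energy_rescale s a (ltW D0) sX pB).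
  by rewrite /step_energy big_seq1 /= X1 X0 subr0 powR1.
rewrite -[X in attainable _ _ _ _ X]mulr1.
apply: (attainable_self_similar (ltnW n_gt1) (ltn0Sn 0) _ sX X0 X1 _ s0 sb ler01 phase).
  by apply/andP; split; lra.
by apply/andP; split; lra.
Qed.

Definition twist_const {R : realType} : R := expR (-3) / 6.

Lemma twist_const_gt0 (R : realType) : 0 < twist_const :> R.
Proof. by rewrite divr_gt0 ?expR_gt0. Qed.

Lemma twist_const_base (R : realType) (s b : R) : 0 < s -> 0 < b ->
  twist_const / s * b^-1 <= expR (-2) / (2 * s * (2 * b)).
Proof.
move=> s0 b0.
have -> : twist_const / s * b^-1 = expR (-3) / 6 * (s * b)^-1.
  by rewrite /twist_const; field; rewrite !gt_eqF.
have -> : expR (-2) / (2 * s * (2 * b)) = expR (-2) / 4 * (s * b)^-1.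
  by field; rewrite !gt_eqF.
rewrite ler_pM2r ?invr_gt0 ?mulr_gt0 //.
have : expR (-3) <= expR (-2) :> R by rewrite ler_expR; lra.
have := expR_gt0 (-3 : R); lra.
Qed.

(* The scale factor [(2 rho)^s] costs at most a factor [e], since [s ln (1/rho) <= 1]. *)
Lemma twist_const_step (R : realType) (rho s : R) : 0 < rho <= 2^-1 -> 0 < s ->
  s * ln rho^-1 <= 1 ->
  twist_const / s * rho^-1 <= expR (-2) / (2 * s * (3 * rho)) * (2 * rho) `^ s.
Proof.
move=> /andP[r0 r1] s0 sl.
have e1 : expR (-1) <= (2 * rho) `^ s.
  apply: le_trans (ge0_ler_powR2 (ltW s0) (ltW r0) (_ : rho <= 2 * rho)) ; last by lra.
  rewrite /powR gt_eqF // ler_expR; rewrite lnV ?posrE // in sl; lra.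
have -> : twist_const / s * rho^-1 = expR (-2) * expR (-1) * (6 * s * rho)^-1.
  rewrite /twist_const (_ : -3 = -2 + -1) ?expRD; last by lra.
  by field; rewrite !gt_eqF.
have -> : expR (-2) / (2 * s * (3 * rho)) * (2 * rho) `^ s =
          expR (-2) * (2 * rho) `^ s * (6 * s * rho)^-1.
  by field; rewrite !gt_eqF.
by rewrite ler_pM2r ?invr_gt0 ?mulr_gt0 // ler_pM2l ?expR_gt0.
Qed.

Lemma attainable_lower_bound (R : realType) (rho s : R) :
  0 < rho <= 8^-1 -> 0 < s -> s * ln rho^-1 <= 1 -> forall m n, (0 < m < n)%N ->
  attainable n m rho s ((twist_const / s) ^+ m * rho^-1 ^+ ((n + m - 1)./2)).
Proof.
move=> /andP[r0 r1] s0 sl.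
have s3 : s * (3 * rho) <= 2^-1.
  have : 1 - rho <= ln rho^-1.
    by rewrite lnV ?posrE //; have := ln_le_subr1 r0; lra.
  have r3 : 3 * rho <= 3 / 8 by lra.
  have := ler_wpM2l (ltW s0) r3; nra.
have rho_small : 0 < rho <= 6^-1 by apply/andP; split; lra.
have rho_half : 0 < rho <= 2^-1 by apply/andP; split; lra.
elim=> [|m IH] n /andP[_ mn] //.
have [m0|m_gt0] := posnP m.
  have n1 : (1 < n)%N by rewrite -m0.
  have /andP[b0 b1] := base_gap_bounds rho_half n1.
  rewrite m0 expr1 addn1 subn1 /= exprVn.
  apply: attainable_weaken (attainable_base _ n1 s0 _) (twist_const_base s0 b0).
    by apply/andP; split; lra.
  have b3 : 2 * base_gap rho n <= 3 * rho by lra.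
  by have := ler_wpM2l (ltW s0) b3; lra.
case: n mn => [//|n] mn.
have /IH IHn : (0 < m < n)%N by rewrite m_gt0.
set E := _ * _ in IHn.
have E0 : 0 <= E by rewrite mulr_ge0 ?exprn_ge0 ?divr_ge0 ?invr_ge0 ?ltW ?twist_const_gt0.
apply: attainable_weaken (attainable_step _ rho_small s0 s3 E0 IHn) _; first by lia.
rewrite (_ : (n.+1 + m.+1 - 1)./2 = ((n + m - 1)./2).+1)%N; last by lia.
rewrite !exprS mulrACA -/E mulrA ler_wpM2r //.
by apply: twist_const_step s0 sl; apply/andP; split; lra.
Qed.

Theorem theorem7 (R : realType) :
  exists (c rho0 : R), 0 < c /\ 0 < rho0 <= 2^-1 /\
  forall (rho : R) (n m : nat) (s : R),
    0 < rho <= rho0 -> (2 <= n)%N -> (1 <= m <= n - 1)%N ->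
    0 < s <= (m%:R * ln (rho^-1))^-1 ->
    (((c / s) ^+ m * (rho^-1) ^+ ((n + m - 1)./2))%:E
       <= twist_energy_sup n m rho s)%E.
Proof.
exists twist_const, 8^-1; split; first exact: twist_const_gt0.
split; first by apply/andP; split; lra.
move=> rho n m s rho_range n2 /andP[m1 mn] /andP[s0 sm].
have /andP[r0 r1] := rho_range.
have L0 : 0 < ln rho^-1 by rewrite ln_gt0 // invf_gt1 //; lra.
have mL : 0 < m%:R * ln rho^-1 by rewrite mulr_gt0 // ltr0n.
have sl : s * ln rho^-1 <= 1.
  have := ler_wpM2r (ltW mL) sm; rewrite mulVf ?gt_eqF // => smL.
  apply: le_trans smL; rewrite mulrCA -[leLHS]mul1r.
  by apply: ler_wpM2r; [exact: mulr_ge0 (ltW s0) (ltW L0) | rewrite ler1n].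
have mn' : (0 < m < n)%N by lia.
have [S [p [sS S0 S1 run]]] := attainable_lower_bound rho_range s0 sl mn'.
exact: twist_energy_sup_ge_run (ltnW n2) m1 (sorted_on_unit sS S0 S1) run.
Qed.
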